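(* Let $G$ be a finite simple connected graph with $m\ge 1$ edges such that $\sum_{e_{uv}\in E}(d_u+d_v)=4m$. Then $G$ is either a cycle (of any order) or a tree having a unique vertex of largest degree, this largest degree being $\Delta=3$. In the latter case the tree has order $n\geq 4$.
   Context: $d_u$ denotes the degree of vertex $u$; the sum is over all edges $e_{uv}$ of $G$, each counted once. *)

From mathcomp Require Import all_boot.
Set Implicit Arguments. Unset Strict Implicit. Unset Printing Implicit Defensive.

Section Graphs.
Variable T : finType.

Definition simple_graph (e : rel T) : Prop := symmetric e /\ irreflexive e.

Definition connected_graph (e : rel T) : Prop := forall x y : T, connect e x y.

Definition deg (e : rel T) (u : T) : nat := #|[set v | e u v]|.

(* edge set: each edge e_uv as the 2-element set {u, v}, counted once *)
Definition edges (e : rel T) : {set {set T}} :=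
  [set [set x; y] | x in T, y in T & e x y].

Definition has_cycle (e : rel T) : Prop :=
  exists (x : T) (p : seq T),
    [/\ 2 <= size p, path e x p, uniq (x :: p) & e (last x p) x].

Definition is_tree (e : rel T) : Prop := connected_graph e /\ ~ has_cycle e.

Definition is_cycle_graph (e : rel T) : Prop :=
  exists (n : nat) (f : 'I_n -> T),
    [/\ 3 <= n, bijective f &
        forall i j : 'I_n,
          e (f i) (f j) = ((j == i.+1 %% n :> nat) || (i == j.+1 %% n :> nat))].

End Graphs.

From mathcomp Require Import all_boot zify.
Set Implicit Arguments. Unset Strict Implicit. Unset Printing Implicit Defensive.

(* Every edge uv contributes d_u + d_v, so the hypothesis reads
   sum_v d_v^2 = 4m = 2 sum_v d_v, i.e. sum_v (d_v - 1)(d_v - 2) = 2(n - m).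
   A connected graph has n <= m + 1 (the edges from the vertices other than a
   root r to a neighbour closer to r are pairwise distinct), and n <= m if it
   contains a cycle (deleting an edge of the cycle keeps it connected).  Hence
   at most one term (d_v - 1)(d_v - 2) is nonzero, and it equals 2, i.e. d_v = 3.
   If none is, all degrees are at most 2 and n = m forces them all to be 2; a
   connected 2-regular graph is a cycle, as one sees by closing up a maximal
   path.  Otherwise n = m + 1 and G is a tree with a unique vertex of degree 3. *)

Lemma edgesP (T : finType) (e : rel T) E :
  reflect (exists x y, e x y /\ E = [set x; y]) (E \in edges e).
Proof.
apply: (iffP imset2P) => [[x y _]|[x [y [exy ->]]]].
  by rewrite inE => exy ->; exists x, y.
by apply: (Imset2spec (x1 := x) (x2 := y)); rewrite ?inE.
Qed.

Section Graph.
Variables (T : finType) (e : rel T).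
Hypotheses (e_sym : symmetric e) (e_irr : irreflexive e).

Lemma card_edges_at v : #|[set E in edges e | v \in E]| = deg e v.
Proof.
have -> : [set E in edges e | v \in E] = [set [set v; w] | w in [set w | e v w]].
  apply/setP=> E; rewrite inE; apply/andP/imsetP => [[/edgesP[x [y [exy ->]]]]|].
    case/set2P=> ->; first by exists y; rewrite ?inE.
    by exists x; rewrite 1?setUC // inE e_sym.
  case=> w; rewrite inE => evw ->; split; last by rewrite !inE eqxx.
  by apply/edgesP; exists v, w.
rewrite card_in_imset // => w1 w2; rewrite !inE => _ evw2 eq12.
have : w2 \in [set v; w1] by rewrite eq12 !inE eqxx orbT.
by case/set2P=> // w2v; rewrite w2v e_irr in evw2.
Qed.

Lemma card_edge E : E \in edges e -> #|E| = 2.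
Proof.
by case/edgesP=> x [y [exy ->]]; rewrite cards2; case: eqP exy => [->|]; rewrite ?e_irr.
Qed.

Lemma sum_over_edges (F : T -> nat) :
  \sum_(E in edges e) \sum_(v in E) F v = \sum_v F v * deg e v.
Proof.
transitivity (\sum_(E in edges e) \sum_v (v \in E) * F v).
  apply: eq_bigr => E _; rewrite big_mkcond.
  by apply: eq_bigr => v _; case: (v \in E); rewrite ?mul1n.
rewrite exchange_big; apply: eq_bigr => v _.
rewrite -card_edges_at -sum1_card mulnC big_distrl big_mkcond [RHS]big_mkcond /=.
by apply: eq_bigr => E _; rewrite inE; case: (E \in edges e); case: (v \in E).
Qed.

Lemma handshake : \sum_v deg e v = 2 * #|edges e|.
Proof.
have := sum_over_edges (fun _ => 1); rewrite (eq_bigr (fun _ => 2)); last first.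
  by move=> E /card_edge <-; rewrite sum1_card.
by rewrite sum_nat_const mulnC; under eq_bigr do rewrite mul1n.
Qed.

Lemma deg_gt0 v : connected_graph e -> 0 < #|edges e| -> 0 < deg e v.
Proof.
move=> conn /card_gt0P[_ /edgesP[x [y [exy _]]]].
have [v_isolated|//] := posnP (deg e v).
suff reach_v w : w = v by move: exy; rewrite (reach_v x) (reach_v y) e_irr.
case/connectP: (conn v w) => [[|z p] //= /andP[evz _] _].
by move/eqP: v_isolated; rewrite cards_eq0 => /eqP/setP/(_ z); rewrite !inE evz.
Qed.

Section Distance.
Hypothesis conn : connected_graph e.
Variable r : T.

Definition reachable_in k w := [exists t : k.-tuple T, path e r t && (last r t == w)].

Lemma reachable_in_exists w : exists k, reachable_in k w.
Proof.
case/connectP: (conn r w) => p pp ->; exists (size p).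
by apply/existsP; exists (in_tuple p); rewrite /= pp eqxx.
Qed.

Definition dist w := ex_minn (reachable_in_exists w).

Lemma reachable_in_dist w : reachable_in (dist w) w.
Proof. by rewrite /dist; case: ex_minnP. Qed.

Lemma dist_min w k : reachable_in k w -> dist w <= k.
Proof. by rewrite /dist; case: ex_minnP => m _; apply. Qed.

Lemma exists_closer_nbr w : w != r -> exists u, e u w && (dist u < dist w).
Proof.
case/existsP: (reachable_in_dist w) => -[p /= /eqP size_p] /andP[].
case/lastP: p size_p => [_ _ /eqP <-|p u]; first by rewrite eqxx.
rewrite size_rcons rcons_path last_rcons => <- /andP[pp eu /eqP <-] _.
exists (last r p); rewrite eu ltnS; apply: dist_min.
by apply/existsP; exists (in_tuple p); rewrite /= pp eqxx.
Qed.

Definition parent w := odflt w [pick u | e u w && (dist u < dist w)].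

Lemma parentP w : w != r -> e (parent w) w /\ dist (parent w) < dist w.
Proof.
move/exists_closer_nbr => ex_u; rewrite /parent.
by case: pickP => [u /andP[]|none] //; case: ex_u => u; rewrite none.
Qed.

Lemma parent_edge_inj : {in [set~ r] &, injective (fun w => [set parent w; w])}.
Proof.
move=> w1 w2; rewrite !inE => /parentP[_ lt1] /parentP[_ lt2] eq12.
apply/eqP/negPn/negP => w12.
have /set2P[w1p2|] : w1 \in [set parent w2; w2] by rewrite -eq12 !inE eqxx orbT.
  have /set2P[w2p1|] : w2 \in [set parent w1; w1] by rewrite eq12 !inE eqxx orbT.
    by move: lt1 lt2; rewrite -w1p2 -w2p1; lia.
  by move/eqP; rewrite eq_sym (negbTE w12).
by move/eqP; rewrite (negbTE w12).
Qed.

End Distance.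

Lemma card_le_edges_connected : connected_graph e -> #|T| <= #|edges e| + 1.
Proof.
move=> conn; have [-> //|/card_gt0P[r _]] := posnP #|T|.
have parent_edge_sub : [set [set parent conn r w; w] | w in [set~ r]] \subset edges e.
  apply/subsetP => E /imsetP[w]; rewrite !inE => wr ->.
  have [epw _] := parentP conn wr.
  by apply/edgesP; exists (parent conn r w), w.
have := subset_leq_card parent_edge_sub.
rewrite card_in_imset ?cardsC1; last exact: parent_edge_inj.
by rewrite addn1 -ltnS; apply: leq_trans (leqSpred _).
Qed.

Definition del_edge (E0 : {set T}) : rel T := fun u v => e u v && ([set u; v] != E0).

Lemma edges_del_edge E0 : edges (del_edge E0) = edges e :\ E0.
Proof.
apply/setP => E; rewrite in_setD1; apply/edgesP/andP.
  by case=> u [v [/andP[euv uvE0] ->]]; split=> //; apply/edgesP; exists u, v.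
by case=> EE0 /edgesP[u [v [euv E_uv]]]; exists u, v; rewrite /del_edge /= euv -E_uv EE0.
Qed.

Lemma del_edge_sym E0 : symmetric (del_edge E0).
Proof. by move=> u v; rewrite /del_edge e_sym setUC. Qed.

Lemma connected_del_edge x a :
  connected_graph e -> connect (del_edge [set x; a]) x a ->
  connected_graph (del_edge [set x; a]).
Proof.
move=> conn cxa u v; apply: connect_sub (conn u v) => {}u {}v euv.
have [uvE0|uv_ne] := eqVneq [set u; v] [set x; a]; last first.
  by apply: connect1; rewrite /del_edge euv uv_ne.
have [u_xa v_xa] : u \in [set x; a] /\ v \in [set x; a] by rewrite -uvE0 !inE !eqxx orbT.
have [-> //|uv] := eqVneq u v.
have cax : connect (del_edge [set x; a]) a x by rewrite (sym_connect_sym (@del_edge_sym _)).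
by case/set2P: u_xa uv => ->; case/set2P: v_xa => ->; rewrite ?eqxx.
Qed.

Lemma connect_del_cycle_edge x q a :
  path e x (rcons q a) -> uniq (x :: rcons q a) -> 0 < size q ->
  connect (del_edge [set x; a]) x a.
Proof.
rewrite rcons_path -rcons_cons rcons_uniq => /andP[pq eqa] /andP[a_xq /andP[x_q _]] q_gt0.
apply/connectP; exists (rcons q a); last by rewrite last_rcons.
rewrite rcons_path /del_edge eqa; apply/andP; split.
  have xq_a : all (predC1 a) (x :: q).
    by apply/allP => u u_xq; apply: contraNneq a_xq => <-.
  apply: sub_in_path xq_a pq => u v /[!inE] ua va ->; apply/eqP => uv_xa.
  have /set2P[au|av] : a \in [set u; v] by rewrite uv_xa !inE eqxx orbT.
    by rewrite au eqxx in ua.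
  by rewrite av eqxx in va.
have last_q : last x q \in q by case: (q) q_gt0 => // y q' _ /=; exact: mem_last.
apply: contraNneq x_q => last_xa.
have /set2P[-> //|xa] : x \in [set last x q; a] by rewrite last_xa !inE eqxx.
by move: a_xq; rewrite xa inE eqxx.
Qed.

End Graph.

Lemma card_le_edges_cyclic (T : finType) (e : rel T) :
  simple_graph e -> connected_graph e -> has_cycle e -> #|T| <= #|edges e|.
Proof.
case=> e_sym _ conn [x [p [p_ge2 pp up ea]]].
case/lastP: p p_ge2 pp up ea => [|q a] //; rewrite size_rcons last_rcons => q_gt0 pp up ea.
have conn' := connected_del_edge e_sym conn (connect_del_cycle_edge pp up q_gt0).
have xa_edge : [set x; a] \in edges e by apply/edgesP; exists a, x; rewrite setUC.
have := card_le_edges_connected conn'.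
by rewrite edges_del_edge (cardsD1 [set x; a] (edges e)) xa_edge addnC.
Qed.

Lemma deg2_nbr (T : finType) (e : rel T) u a b y :
  deg e u = 2 -> e u a -> e u b -> a != b -> e u y -> (y == a) || (y == b).
Proof.
move=> deg_u eua eub ab euy.
have nbrs_u : [set a; b] = [set v | e u v].
  apply/eqP; rewrite eqEcard cards2 ab -/(deg e u) deg_u andbT.
  by apply/subsetP => v /set2P[]->; rewrite inE.
have : y \in [set v | e u v] by rewrite inE.
by rewrite -nbrs_u !inE.
Qed.

Lemma exists_maximal_path (T : finType) (e : rel T) x :
  exists s, [/\ path e x s, uniq (x :: s) & forall y, e (last x s) y -> y \in x :: s].
Proof.
suff extend s : path e x s -> uniq (x :: s) -> exists s',
    [/\ path e x s', uniq (x :: s') & forall y, e (last x s') y -> y \in x :: s'].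
  exact: (extend [::]).
have [k] := ubnP (#|T| - size s); elim: k s => // k IHk s size_s ps us.
have [y /andP[ey y_new]|s_max] := pickP [pred y | e (last x s) y && (y \notin x :: s)].
  have := max_card (mem (x :: s)); rewrite (card_uniqP us) /= => s_lt.
  apply: (IHk (rcons s y)); first by rewrite size_rcons subnS -ltnS prednK // subn_gt0.
    by rewrite rcons_path ps ey.
  by rewrite -rcons_cons rcons_uniq y_new us.
exists s; split=> // y ey; apply: contraFT (s_max y) => y_new.
by rewrite /= ey y_new.
Qed.

Lemma ordS_ordS_neq n (i : 'I_n) : 2 < n -> ordS (ordS i) != i.
Proof.
move=> n_gt2; apply/eqP => /(congr1 val) /=.
have [i_lt|i_eq] : i.+1 < n \/ i.+1 = n by have := ltn_ord i; lia.
  rewrite (modn_small i_lt); have [i2_lt|i2_eq] : i.+2 < n \/ i.+2 = n by lia.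
    by rewrite modn_small //; lia.
  by rewrite i2_eq modnn; lia.
by rewrite i_eq modnn modn_small //; lia.
Qed.

Section TwoRegular.
Variables (T : finType) (e : rel T).
Hypotheses (e_sym : symmetric e) (e_irr : irreflexive e).
Hypothesis deg_eq2 : forall v, deg e v = 2.
Variables (x0 : T) (s : seq T).
Hypotheses (path_s : path e x0 s) (uniq_s : uniq (x0 :: s)).
Hypothesis s_max : forall y, e (last x0 s) y -> y \in x0 :: s.

Local Notation c := (x0 :: s).
Local Notation n := (size c).
Local Notation C i := (nth x0 c i).

Lemma nth_path_adj i : i.+1 < n -> e (C i) (C i.+1).
Proof. exact: (pathP x0 path_s). Qed.

Lemma nth_path_inj i j : i < n -> j < n -> (C i == C j) = (i == j).
Proof. by move=> i_lt j_lt; rewrite nth_uniq. Qed.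

Lemma inner_vertex_nbr j z : 0 < j -> j.+1 < n -> e (C j) z -> (z == C j.-1) || (z == C j.+1).
Proof.
move=> j_gt0 j_lt; apply: deg2_nbr; rewrite ?deg_eq2 ?nth_path_adj //.
  by rewrite e_sym -[in C j](prednK j_gt0) nth_path_adj // prednK // ltnW.
by rewrite nth_path_inj; lia.
Qed.

Lemma last_vertex_nbr j : j < n -> e (C n.-1) (C j) -> (j == 0) || (j == n.-2).
Proof.
move=> j_lt e_last_j; apply/negPn/negP => /norP[j_neq0 j_neq].
have j_neq_last : j != n.-1 by apply: contraTneq e_last_j => ->; rewrite e_irr.
move: e_last_j; rewrite e_sym => /inner_vertex_nbr.
by rewrite !nth_path_inj; lia.
Qed.

(* Interior vertices of the path already have their two neighbours on it, so
   the neighbours of the last vertex can only be the first and the penultimate. *)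
Lemma closing_edge : 3 <= n /\ e (C n.-1) (C 0).
Proof.
have nbr_index y : e (C n.-1) y -> exists2 j, (j == 0) || (j == n.-2) & y = C j.
  move=> ey; have y_c : y \in c by apply: s_max; rewrite (last_nth x0).
  exists (index y c); last by rewrite nth_index.
  by apply: last_vertex_nbr; rewrite ?index_mem ?nth_index.
have [y1 [y2 [y12 nbrs]]] : exists y1 y2, y1 != y2 /\ [set y | e (C n.-1) y] = [set y1; y2].
  by apply/cards2P; rewrite -/(deg e _) deg_eq2.
have e_last y : y \in [set y1; y2] -> e (C n.-1) y by rewrite -nbrs inE.
have [j1 j1P y1_C] := nbr_index y1 (e_last y1 (set21 y1 y2)).
have [j2 j2P y2_C] := nbr_index y2 (e_last y2 (set22 y1 y2)).
have j12 : j1 != j2 by apply: contraNneq y12 => j12; rewrite y1_C y2_C j12.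
split; first by move: j1P j2P j12 => /=; lia.
have [j1_0|j1_ne0] := eqVneq j1 0; first by rewrite -j1_0 -y1_C e_last ?set21.
have j2_0 : j2 = 0 by move: j1P j2P j12 j1_ne0; lia.
by rewrite -j2_0 -y2_C e_last ?set22.
Qed.

Definition cycle_vertex (i : 'I_n) : T := C i.

Lemma cycle_vertex_inj : injective cycle_vertex.
Proof. by move=> i j /eqP; rewrite nth_path_inj // => /eqP/val_inj. Qed.

Lemma cycle_vertex_adj_ordS i : e (cycle_vertex i) (cycle_vertex (ordS i)).
Proof.
rewrite /cycle_vertex /=; have [i_lt|i_ge] := ltnP i.+1 n.
  by rewrite modn_small ?nth_path_adj.
have -> : i = n.-1 :> nat by have := ltn_ord i; lia.
by rewrite prednK // modnn; case: closing_edge.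
Qed.

Lemma cycle_vertex_nbr i y :
  e (cycle_vertex i) y -> (y == cycle_vertex (ordS i)) || (y == cycle_vertex (ord_pred i)).
Proof.
apply: deg2_nbr; rewrite ?deg_eq2 ?cycle_vertex_adj_ordS //.
  by rewrite e_sym; have := cycle_vertex_adj_ordS (ord_pred i); rewrite ord_predK.
rewrite (inj_eq cycle_vertex_inj) -(inj_eq (@ordS_inj _)) ord_predK.
by apply: ordS_ordS_neq; case: closing_edge.
Qed.

Lemma cycle_vertex_adj i j :
  e (cycle_vertex i) (cycle_vertex j) = (j == ordS i) || (i == ordS j).
Proof.
apply/idP/orP => [/cycle_vertex_nbr|[]/eqP->];
  rewrite ?cycle_vertex_adj_ordS 1?e_sym ?cycle_vertex_adj_ordS //.
by rewrite !(inj_eq cycle_vertex_inj) => /orP[->|/eqP->]; [left | right; rewrite ord_predK].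
Qed.

Hypothesis conn : connected_graph e.

Lemma mem_maximal_path y : y \in c.
Proof.
have c_closed : closed e [pred y | y \in c].
  apply: (intro_closed (sym_connect_sym e_sym)) => x z exz /= x_c.
  have x_idx : index x c < n by rewrite index_mem.
  have x_eq : x = cycle_vertex (Ordinal x_idx) by rewrite /cycle_vertex nth_index.
  rewrite x_eq in exz.
  by case/orP: (cycle_vertex_nbr exz) => /eqP->; rewrite /cycle_vertex mem_nth.
by have := closed_connect c_closed (conn x0 y); rewrite /= mem_head.
Qed.

Lemma maximal_path_cycle_graph : is_cycle_graph e.
Proof.
exists n, cycle_vertex; split; [by case: closing_edge | | exact: cycle_vertex_adj].
apply: (inj_card_bij cycle_vertex_inj); rewrite card_ord -(card_uniqP uniq_s).
by apply/subset_leq_card/subsetP => y _; apply: mem_maximal_path.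
Qed.

End TwoRegular.

Lemma two_regular_cycle_graph (T : finType) (e : rel T) (x0 : T) :
  simple_graph e -> connected_graph e -> (forall v, deg e v = 2) -> is_cycle_graph e.
Proof.
case=> e_sym e_irr conn deg_eq2; have [s [path_s uniq_s s_max]] := exists_maximal_path e x0.
exact: maximal_path_cycle_graph path_s uniq_s s_max conn.
Qed.

Lemma deg_lt_card (T : finType) (e : rel T) v : irreflexive e -> deg e v < #|T|.
Proof.
move=> e_irr; have := max_card (mem (v |: [set w | e v w])).
by rewrite cardsU1 inE e_irr.
Qed.

Lemma eq_of_leq_sum (I : finType) (F G : I -> nat) :
  (forall i, F i <= G i) -> \sum_i G i <= \sum_i F i -> forall i, F i = G i.
Proof.
move=> FG sumGF i; have [_] := leqif_sum (fun j (_ : predT j) => leqif_eq (FG j)).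
by rewrite eqn_leq sumGF leq_sum // => /esym/forall_inP/(_ i isT)/eqP.
Qed.

Lemma sum_bin2_pred (I : finType) (F : I -> nat) : (forall i, 0 < F i) ->
  2 * \sum_i 'C((F i).-1, 2) + 3 * \sum_i F i = \sum_i F i * F i + 2 * #|I|.
Proof.
move=> F_gt0; rewrite !big_distrr -!big_split -sum1_card big_distrr -big_split /=.
apply: eq_bigr => i _; rewrite -mul_bin_diag bin1 muln1.
by have := F_gt0 i; nia.
Qed.

Lemma bin2_eq0 k : ('C(k, 2) == 0) = (k < 2).
Proof. by rewrite eqn0Ngt bin_gt0 -ltnNge. Qed.

Lemma bin2_eq1 k : 'C(k, 2) = 1 -> k = 2.
Proof.
move=> bin_k; have := mul_bin_diag k 1; rewrite bin1 bin_k.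
by case: (k) => [|[|[|j]]] //=; nia.
Qed.

Theorem lemma1 (T : finType) (e : rel T) :
  simple_graph e -> connected_graph e ->
  1 <= #|edges e| ->
  \sum_(E in edges e) (\sum_(v in E) deg e v) = 4 * #|edges e| ->
  is_cycle_graph e \/
  (is_tree e /\
   (exists v : T, deg e v = 3 /\ forall w : T, w != v -> deg e w < 3) /\
   4 <= #|T|).
Proof.
move=> sg conn m_gt0 sum_eq; have [e_sym e_irr] := sg.
have deg_gt0 v : 0 < deg e v by apply: deg_gt0.
have := sum_bin2_pred deg_gt0.
rewrite -sum_over_edges // sum_eq handshake // => excess_eq.
have n_le := card_le_edges_connected conn.
set excess := \sum_v 'C((deg e v).-1, 2) in excess_eq.
have [excess0|excess1] : excess = 0 \/ excess = 1 by lia.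
  left; have /card_gt0P[x0 _] : 0 < #|T| by lia.
  apply: (two_regular_cycle_graph x0 sg conn).
  have deg_le2 v : deg e v <= 2.
    by move/eqP: excess0; rewrite sum_nat_eq0 => /forallP/(_ v); rewrite bin2_eq0; lia.
  apply: eq_of_leq_sum deg_le2 _.
  have sum2 : \sum_(v : T) 2 = 2 * #|T| by rewrite sum_nat_const mulnC.
  by rewrite handshake // sum2; lia.
right; have /eqP/sum_nat_eq1[v [_ bin_v bin_w]] := excess1.
have deg_v : deg e v = 3 by have := bin2_eq1 bin_v; lia.
split; [split=> // has_cyc | split].
- by have := card_le_edges_cyclic sg conn has_cyc; lia.
- exists v; split=> // w /bin_w/(_ isT)/eqP; rewrite bin2_eq0; lia.
- by rewrite -deg_v deg_lt_card.
Qed.
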